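(* Let $v=v(z)=zM(z)$, where $M(z)=\frac{1-z-\sqrt{1-2z-3z^2}}{2z^2}$ (so $z=\frac{v}{1+v+v^2}$). The total number of leaves over all Retakh plane trees, counted by number of nodes, has generating function $$\sum_{\tau}\mathrm{leaves}(\tau)\,z^{|\tau|}=\frac{v(1+v)(1-v+2v^2-v^3)}{(1-v)(1+v+v^2)},$$ where the sum runs over all Retakh plane trees $\tau$, $|\tau|$ is the number of nodes, and $\mathrm{leaves}(\tau)$ is the number of nodes with no children (the one-node tree has one leaf).
   Context: A Retakh plane tree is a plane (ordered rooted) tree in which every non-root leaf has depth $1$ or even depth (root depth $0$); the one-node tree is included. These correspond to Dyck paths all of whose peaks are at level $1$ or at an even level, non-root leaves corresponding to peaks. *)

From Stdlib Require Import Reals Lra Arith List Bool.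
From Coquelicot Require Import Coquelicot.
Import ListNotations.
Open Scope nat_scope.

Inductive tree : Type := Node : list tree -> tree.

Fixpoint tsize (t : tree) : nat :=
  match t with
  | Node cs => S ((fix go (l : list tree) : nat :=
                     match l with [] => 0 | c :: l' => tsize c + go l' end) cs)
  end.

Fixpoint leaves (t : tree) : nat :=
  match t with
  | Node [] => 1
  | Node cs => (fix go (l : list tree) : nat :=
                  match l with [] => 0 | c :: l' => leaves c + go l' end) cs
  end.

(* leaves_ok d t : every leaf of the subtree t, whose root sits at depth d,
   has depth 1 or even depth *)
Fixpoint leaves_ok (d : nat) (t : tree) : bool :=
  match t with
  | Node [] => (d =? 1) || Nat.even d
  | Node cs => (fix go (l : list tree) : bool :=
                  match l with [] => true | c :: l' => leaves_ok (S d) c && go l' end) cs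
  end.

(* Retakh plane tree: every non-root leaf has depth 1 or even depth
   (root has depth 0); the one-node tree is included. *)
Definition retakh (t : tree) : bool :=
  match t with
  | Node cs => forallb (leaves_ok 1) cs
  end.

(* Enumeration: forests_aux fuel n = all ordered forests with n nodes in total
   (correct whenever fuel >= n). The first tree of a forest has k+1 nodes. *)
Fixpoint forests_aux (fuel n : nat) : list (list tree) :=
  match n with
  | 0 => [ [] ]
  | S _ =>
    match fuel with
    | 0 => []
    | S f =>
      flat_map (fun k =>
        flat_map (fun cs =>
          map (fun rest => Node cs :: rest) (forests_aux f (n - S k)))
          (forests_aux f k))
        (seq 0 n)
    end
  end.

Definition trees_of_size (n : nat) : list tree :=
  match n with
  | 0 => []
  | S m => map Node (forests_aux m m)
  end.

Definition total_leaves (n : nat) : nat :=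
  fold_right Nat.add 0 (map leaves (filter retakh (trees_of_size n))).

Open Scope R_scope.

Definition Mgf (z : R) : R := (1 - z - sqrt (1 - 2*z - 3*z^2)) / (2 * z^2).
Definition vgf (z : R) : R := z * Mgf z.

From Stdlib Require Import Reals Lra Lia Arith List Bool.
From Coquelicot Require Import Coquelicot.
Import ListNotations.
Open Scope R_scope.

(* A Retakh tree with m+1 nodes is a root over an ordered forest of m nodes whose roots
   sit at depth 1.  Whether a leaf at depth d is allowed depends only on d = 1 or on the
   parity of d >= 2, so only forests with roots at depths 1, 2 and 3 matter.  Splitting
   off the first tree of a forest gives convolution recurrences for the numbers P, E, O
   of admissible forests at depths 1, 2, 3 and for their total leaf counts Q1, QE, QO.
   For the generating functions these read
     E = 1 + zOE,  O = 1 + z(E-1)O,  P = 1 + zEP,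
     QE = z((1+QO)E + O QE),  QO = z(QE O + (E-1)QO),  Q1 = z((1+QE)P + E Q1),
   and the series of the theorem is z(1 + Q1).  All six series converge absolutely for
   |z| < 1/3, since by induction their partial sums at x = v/(1+v+v^2), 0 < v < 1, are
   bounded by the closed forms.  Finally E - 1 is the root v(z) in (-1,1) of
   z w^2 + (z-1) w + z = 0, and solving the system gives the stated function of v. *)

Fixpoint rsum {A} (f : A -> R) (l : list A) : R :=
  match l with [] => 0 | a :: l => f a + rsum f l end.

Lemma rsum_app {A} (f : A -> R) (l1 l2 : list A) :
  rsum f (l1 ++ l2) = rsum f l1 + rsum f l2.
Proof. induction l1 as [|a l IH]; simpl; [|rewrite IH]; ring. Qed.

Lemma rsum_flat_map {A B} (f : B -> R) (g : A -> list B) (l : list A) :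
  rsum f (flat_map g l) = rsum (fun a => rsum f (g a)) l.
Proof. induction l as [|a l IH]; simpl; [|rewrite rsum_app, IH]; ring. Qed.

Lemma rsum_map {A B} (f : B -> R) (g : A -> B) (l : list A) :
  rsum f (map g l) = rsum (fun a => f (g a)) l.
Proof. induction l as [|a l IH]; simpl; [|rewrite IH]; ring. Qed.

Lemma rsum_ext_in {A} (f g : A -> R) (l : list A) :
  (forall x, In x l -> f x = g x) -> rsum f l = rsum g l.
Proof. induction l as [|a l IH]; simpl; intros H; [|rewrite H, IH]; auto. Qed.

Lemma rsum_plus {A} (f g : A -> R) (l : list A) :
  rsum (fun a => f a + g a) l = rsum f l + rsum g l.
Proof. induction l as [|a l IH]; simpl; [|rewrite IH]; ring. Qed.

Lemma rsum_scal {A} (f : A -> R) (c : R) (l : list A) :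
  rsum (fun a => c * f a) l = c * rsum f l.
Proof. induction l as [|a l IH]; simpl; [|rewrite IH]; ring. Qed.

Lemma rsum_prod {A B} (f : A -> R) (g : B -> R) (l1 : list A) (l2 : list B) :
  rsum (fun a => rsum (fun b => f a * g b) l2) l1 = rsum f l1 * rsum g l2.
Proof. induction l1 as [|a l IH]; simpl; [|rewrite rsum_scal, IH]; ring. Qed.

Lemma rsum_nonneg {A} (f : A -> R) (l : list A) : (forall x, 0 <= f x) -> 0 <= rsum f l.
Proof. intros H; induction l as [|a l IH]; simpl; [lra|specialize (H a); lra]. Qed.

Lemma rsum_seq (g : nat -> R) (n : nat) : rsum g (seq 0 (S n)) = sum_f_R0 g n.
Proof. induction n as [|n IH]; [simpl; ring|]. rewrite seq_S, rsum_app, IH. simpl. ring. Qed.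

Lemma flat_map_ext_in {A B} (f g : A -> list B) (l : list A) :
  (forall x, In x l -> f x = g x) -> flat_map f l = flat_map g l.
Proof. induction l as [|a l IH]; simpl; intros H; auto. rewrite H, IH; auto. Qed.

Lemma forests_aux_step (f n : nat) :
  forests_aux (S f) (S n) =
  flat_map (fun k => flat_map (fun cs => map (fun rest => Node cs :: rest)
     (forests_aux f (S n - S k))) (forests_aux f k)) (seq 0 (S n)).
Proof. reflexivity. Qed.

Lemma forests_aux_fuel (f f' n : nat) :
  (n <= f)%nat -> (n <= f')%nat -> forests_aux f n = forests_aux f' n.
Proof.
  revert f' n; induction f as [|f IH]; intros f' [|n] H1 H2;
    destruct f' as [|f']; try lia; try reflexivity.
  rewrite !forests_aux_step. apply flat_map_ext_in. intros k Hk. apply in_seq in Hk.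
  rewrite (IH f' k) by lia. apply flat_map_ext_in. intros cs _.
  rewrite (IH f' (S n - S k)%nat) by lia. reflexivity.
Qed.

Definition forests (n : nat) : list (list tree) := forests_aux n n.

Lemma forests_split (m : nat) :
  forests (S m) =
  flat_map (fun k => flat_map (fun cs => map (fun rest => Node cs :: rest)
     (forests (m - k))) (forests k)) (seq 0 (S m)).
Proof.
  destruct m as [|m]; [reflexivity|]. unfold forests. rewrite forests_aux_step.
  apply flat_map_ext_in. intros k Hk. apply in_seq in Hk.
  rewrite (forests_aux_fuel (S m) k k) by lia. apply flat_map_ext_in. intros cs _.
  replace (S (S m) - S k)%nat with (S m - k)%nat by lia.
  rewrite (forests_aux_fuel (S m) (S m - k) (S m - k)) by lia. reflexivity.
Qed.

Lemma forests_nonempty (n : nat) (cs : list tree) : In cs (forests (S n)) -> cs <> [].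
Proof.
  rewrite forests_split. intros H.
  apply in_flat_map in H as [k [_ H]]. apply in_flat_map in H as [c [_ H]].
  apply in_map_iff in H as [r [<- _]]. discriminate.
Qed.

Definition ind (b : bool) : R := if b then 1 else 0.

Lemma ind_and (a b : bool) : ind (a && b) = ind a * ind b.
Proof. destruct a, b; simpl; ring. Qed.

Definition forest_ok (d : nat) (f : list tree) : bool := forallb (leaves_ok d) f.

Fixpoint forest_leaves (f : list tree) : nat :=
  match f with [] => 0%nat | t :: f => (leaves t + forest_leaves f)%nat end.

Lemma leaves_ok_node (d : nat) (cs : list tree) :
  cs <> [] -> leaves_ok d (Node cs) = forest_ok (S d) cs.
Proof. destruct cs; [congruence|reflexivity]. Qed.

Lemma leaves_node (cs : list tree) : cs <> [] -> leaves (Node cs) = forest_leaves cs.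
Proof. destruct cs; [congruence|reflexivity]. Qed.

Definition nforests (d n : nat) : R := rsum (fun f => ind (forest_ok d f)) (forests n).
Definition nleaves (d n : nat) : R :=
  rsum (fun f => ind (forest_ok d f) * INR (forest_leaves f)) (forests n).

Definition leaf_ok_at (d : nat) : R := ind ((d =? 1)%nat || Nat.even d).

Definition with0 (c : R) (a : nat -> R) (k : nat) : R :=
  match k with 0%nat => c | S _ => a k end.

Definition conv (t b : nat -> R) (m : nat) : R := sum_f_R0 (fun k => t k * b (m - k)%nat) m.

Lemma conv_ext (t t' b b' : nat -> R) (m : nat) :
  (forall k, t k = t' k) -> (forall k, b k = b' k) -> conv t b m = conv t' b' m.
Proof. intros Ht Hb. unfold conv. apply sum_eq. intros. rewrite Ht, Hb. reflexivity. Qed.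

(* A tree with root at depth d and k further nodes: it is a single leaf when k = 0,
   otherwise its children form an admissible forest at depth d+1. *)
Lemma tree_count (d k : nat) :
  rsum (fun cs => ind (leaves_ok d (Node cs))) (forests k)
  = with0 (leaf_ok_at d) (nforests (S d)) k.
Proof.
  destruct k as [|k]; [simpl; unfold leaf_ok_at; ring|].
  apply rsum_ext_in. intros cs Hc. rewrite leaves_ok_node by exact (forests_nonempty _ _ Hc).
  reflexivity.
Qed.

Lemma tree_leaf_count (d k : nat) :
  rsum (fun cs => ind (leaves_ok d (Node cs)) * INR (leaves (Node cs))) (forests k)
  = with0 (leaf_ok_at d) (nleaves (S d)) k.
Proof.
  destruct k as [|k]; [simpl; unfold leaf_ok_at; ring|].
  apply rsum_ext_in. intros cs Hc. pose proof (forests_nonempty _ _ Hc).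
  rewrite leaves_ok_node, leaves_node by assumption. reflexivity.
Qed.

Lemma nforests_0 (d : nat) : nforests d 0 = 1.
Proof. unfold nforests, forest_ok; simpl. ring. Qed.

Lemma nleaves_0 (d : nat) : nleaves d 0 = 0.
Proof. unfold nleaves; simpl. ring. Qed.

Lemma nforests_nonneg (d n : nat) : 0 <= nforests d n.
Proof. apply rsum_nonneg. intros; unfold ind; destruct forest_ok; lra. Qed.

Lemma nleaves_nonneg (d n : nat) : 0 <= nleaves d n.
Proof.
  apply rsum_nonneg. intros f. pose proof (pos_INR (forest_leaves f)).
  unfold ind; destruct forest_ok; lra.
Qed.

(* Splitting off the first tree of a forest gives the convolution recurrences. *)
Lemma nforests_S (d m : nat) :
  nforests d (S m) = conv (with0 (leaf_ok_at d) (nforests (S d))) (nforests d) m.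
Proof.
  unfold nforests at 1. rewrite forests_split, rsum_flat_map, rsum_seq. unfold conv.
  apply sum_eq. intros k _. rewrite rsum_flat_map, <- tree_count. unfold nforests.
  rewrite <- rsum_prod. apply rsum_ext_in. intros cs _. rewrite rsum_map.
  apply rsum_ext_in. intros r _. apply ind_and.
Qed.

Lemma nleaves_S (d m : nat) :
  nleaves d (S m) = conv (with0 (leaf_ok_at d) (nleaves (S d))) (nforests d) m
                  + conv (with0 (leaf_ok_at d) (nforests (S d))) (nleaves d) m.
Proof.
  unfold nleaves at 1. rewrite forests_split, rsum_flat_map, rsum_seq. unfold conv.
  rewrite <- sum_plus. apply sum_eq. intros k _.
  rewrite rsum_flat_map, <- tree_count, <- tree_leaf_count. unfold nforests, nleaves.
  rewrite <- !rsum_prod, <- rsum_plus. apply rsum_ext_in. intros cs _.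
  rewrite rsum_map, <- rsum_plus. apply rsum_ext_in. intros r _.
  unfold forest_ok. simpl forest_leaves. simpl forallb. rewrite ind_and, plus_INR. simpl. ring.
Qed.

Fixpoint tree_forest_ind (P : tree -> Prop) (Q : list tree -> Prop) (hnil : Q [])
  (hcons : forall t l, P t -> Q l -> Q (t :: l)) (hnode : forall l, Q l -> P (Node l))
  (t : tree) : P t :=
  match t with
  | Node l => hnode l ((fix go (l : list tree) : Q l :=
       match l with
       | [] => hnil
       | t :: l' => hcons t l' (tree_forest_ind P Q hnil hcons hnode t) (go l')
       end) l)
  end.

Lemma leaves_ok_periodic (t : tree) (d : nat) :
  (2 <= d)%nat -> leaves_ok d t = leaves_ok (S (S d)) t.
Proof.
  revert t d. apply (tree_forest_ind
    (fun t => forall d, (2 <= d)%nat -> leaves_ok d t = leaves_ok (S (S d)) t)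
    (fun l => forall d, (2 <= d)%nat -> forest_ok d l = forest_ok (S (S d)) l)).
  - reflexivity.
  - intros t l Ht Hl d Hd. unfold forest_ok in *. simpl. rewrite Ht, Hl by lia. reflexivity.
  - intros [|c l] Hl d Hd.
    + destruct d as [|[|d]]; [lia|lia|reflexivity].
    + rewrite !leaves_ok_node by discriminate. apply Hl. lia.
Qed.

Lemma forest_ok_periodic (f : list tree) (d : nat) :
  (2 <= d)%nat -> forest_ok d f = forest_ok (S (S d)) f.
Proof.
  intros Hd. induction f as [|t f IH]; [reflexivity|].
  unfold forest_ok in *. simpl. rewrite leaves_ok_periodic, IH by lia. reflexivity.
Qed.

Lemma nforests_periodic (n : nat) : nforests 4 n = nforests 2 n.
Proof. apply rsum_ext_in. intros f _. rewrite (forest_ok_periodic f 2) by lia. reflexivity. Qed.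

Lemma nleaves_periodic (n : nat) : nleaves 4 n = nleaves 2 n.
Proof. apply rsum_ext_in. intros f _. rewrite (forest_ok_periodic f 2) by lia. reflexivity. Qed.

(* The closed recurrence system for depths 1, 2 (even) and 3 (odd); leaves are allowed
   at depths 1 and 2 but not 3. *)
Lemma rec_even m : nforests 2 (S m) = conv (with0 1 (nforests 3)) (nforests 2) m.
Proof. apply nforests_S. Qed.

Lemma rec_odd m : nforests 3 (S m) = conv (with0 0 (nforests 2)) (nforests 3) m.
Proof. rewrite nforests_S. apply conv_ext; [intros [|k]; [reflexivity|apply nforests_periodic]|reflexivity]. Qed.

Lemma rec_one m : nforests 1 (S m) = conv (with0 1 (nforests 2)) (nforests 1) m.
Proof. apply nforests_S. Qed.

Lemma rec_leaves_even m :
  nleaves 2 (S m) = conv (with0 1 (nleaves 3)) (nforests 2) m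
                  + conv (with0 1 (nforests 3)) (nleaves 2) m.
Proof. apply nleaves_S. Qed.

Lemma rec_leaves_odd m :
  nleaves 3 (S m) = conv (with0 0 (nleaves 2)) (nforests 3) m
                  + conv (with0 0 (nforests 2)) (nleaves 3) m.
Proof.
  rewrite nleaves_S. f_equal; apply conv_ext; try reflexivity; intros [|k]; try reflexivity.
  - apply nleaves_periodic.
  - apply nforests_periodic.
Qed.

Lemma rec_leaves_one m :
  nleaves 1 (S m) = conv (with0 1 (nleaves 2)) (nforests 1) m
                  + conv (with0 1 (nforests 2)) (nleaves 1) m.
Proof. apply nleaves_S. Qed.

(* A Retakh tree with m+1 nodes is a root over an admissible depth-1 forest of m nodes. *)
Lemma total_leaves_S (m : nat) : INR (total_leaves (S m)) = with0 1 (nleaves 1) m.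
Proof.
  unfold total_leaves, trees_of_size.
  assert (H : forall l, INR (fold_right Nat.add 0%nat (map leaves (filter retakh (map Node l))))
            = rsum (fun cs => ind (retakh (Node cs)) * INR (leaves (Node cs))) l).
  { induction l as [|cs l IH]; [reflexivity|]. cbn [map filter rsum]. rewrite <- IH.
    destruct (retakh (Node cs)); cbn [fold_right ind map]; rewrite ?plus_INR; ring. }
  rewrite H. destruct m as [|m]; [simpl; ring|].
  apply rsum_ext_in. intros cs Hc. rewrite leaves_node by exact (forests_nonempty _ _ Hc).
  reflexivity.
Qed.

Definition psum (a : nat -> R) (x : R) (N : nat) : R := sum_f_R0 (fun n => a n * x ^ n) N.
Definition gf (a : nat -> R) (z : R) : R := Series (fun n => a n * z ^ n).
Definition abs_summable (a : nat -> R) (z : R) : Prop := ex_series (fun n => Rabs (a n * z ^ n)).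

Lemma with0_nonneg (c : R) (a : nat -> R) :
  0 <= c -> (forall n, 0 <= a n) -> forall n, 0 <= with0 c a n.
Proof. intros Hc Ha [|n]; simpl; auto. Qed.

Lemma psum_ext (a b : nat -> R) (x : R) (N : nat) :
  (forall n, a n = b n) -> psum a x N = psum b x N.
Proof. intros H. apply sum_eq. intros n _. rewrite H. reflexivity. Qed.

Lemma psum_nonneg (a : nat -> R) (x : R) (N : nat) :
  (forall n, 0 <= a n) -> 0 <= x -> 0 <= psum a x N.
Proof. intros Ha Hx. apply cond_pos_sum. intros n. apply Rmult_le_pos; auto. apply pow_le; auto. Qed.

Lemma psum_S (a : nat -> R) (x : R) (N : nat) :
  psum a x (S N) = a 0%nat + x * psum (fun m => a (S m)) x N.
Proof.
  unfold psum. rewrite decomp_sum by lia. simpl Init.Nat.pred. rewrite scal_sum.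
  f_equal; [simpl; ring|]. apply sum_eq. intros i _. simpl. ring.
Qed.

Lemma psum_with0 (c : R) (a : nat -> R) (x : R) (N : nat) :
  psum (with0 c a) x N = c - a 0%nat + psum a x N.
Proof.
  induction N as [|N IH]; unfold psum in *; [simpl; ring|].
  cbn [sum_f_R0]. rewrite IH. simpl with0. ring.
Qed.

Lemma psum_plus (a b : nat -> R) (x : R) (N : nat) :
  psum (fun n => a n + b n) x N = psum a x N + psum b x N.
Proof. unfold psum. rewrite <- sum_plus. apply sum_eq. intros; ring. Qed.

Lemma conv_pow (t b : nat -> R) (x : R) (m : nat) :
  conv t b m * x ^ m = sum_f_R0 (fun k => (t k * x ^ k) * (b (m - k)%nat * x ^ (m - k))) m.
Proof.
  unfold conv. rewrite Rmult_comm, scal_sum. apply sum_eq. intros k Hk.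
  replace (x ^ m) with (x ^ k * x ^ (m - k)) by (rewrite <- pow_add; f_equal; lia). ring.
Qed.

Lemma psum_conv_le (t b : nat -> R) (x : R) (N : nat) :
  (forall n, 0 <= t n) -> (forall n, 0 <= b n) -> 0 <= x ->
  psum (conv t b) x N <= psum t x N * psum b x N.
Proof.
  intros Ht Hb Hx. unfold psum. rewrite (sum_eq _ _ _ (fun m _ => conv_pow t b x m)).
  destruct N as [|N]; [simpl; lra|].
  rewrite (cauchy_finite _ _ (S N)) by lia.
  match goal with |- _ <= _ + ?rest => enough (0 <= rest) by lra end.
  apply cond_pos_sum. intros n. apply cond_pos_sum. intros l.
  apply Rmult_le_pos; apply Rmult_le_pos; auto; apply pow_le; auto.
Qed.

Lemma psum_conv_bound (t b : nat -> R) (x : R) (N : nat) (bt bb : R) :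
  (forall n, 0 <= t n) -> (forall n, 0 <= b n) -> 0 <= x ->
  psum t x N <= bt -> psum b x N <= bb -> psum (conv t b) x N <= bt * bb.
Proof.
  intros Ht Hb Hx H1 H2. eapply Rle_trans; [apply psum_conv_le; auto|].
  apply Rmult_le_compat; auto using psum_nonneg.
Qed.

Lemma abs_summable_of_bounded (a : nat -> R) (z M : R) :
  (forall n, 0 <= a n) -> (forall N, psum a (Rabs z) N <= M) -> abs_summable a z.
Proof.
  intros Ha HM.
  apply (ex_series_ext (fun n => a n * Rabs z ^ n)).
  { intros n. rewrite Rabs_mult, RPow_abs, (Rabs_pos_eq (a n)); auto. }
  destruct (growing_cv (psum a (Rabs z))) as [l Hl].
  - intros n. unfold psum. cbn [sum_f_R0].
    enough (0 <= a (S n) * Rabs z ^ S n) by lra.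
    apply Rmult_le_pos; auto. apply pow_le, Rabs_pos.
  - exists M. intros y [n ->]. auto.
  - exists l. apply is_lim_seq_Reals in Hl.
    change (is_lim_seq (sum_n (fun n => a n * Rabs z ^ n)) l).
    eapply is_lim_seq_ext; [|exact Hl]. intros n. rewrite sum_n_Reals. reflexivity.
Qed.

Lemma gf_correct (a : nat -> R) (z : R) :
  abs_summable a z -> is_series (fun n => a n * z ^ n) (gf a z).
Proof. intros H. apply Series_correct, ex_series_Rabs, H. Qed.

Lemma Rabs_gf_le (a : nat -> R) (z M : R) :
  (forall n, 0 <= a n) -> abs_summable a z ->
  (forall N, psum a (Rabs z) N <= M) -> Rabs (gf a z) <= M.
Proof.
  intros Ha Hs HM.
  assert (Hl : is_lim_seq (sum_n (fun n => a n * z ^ n)) (gf a z)) by exact (gf_correct a z Hs).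
  refine (is_lim_seq_le _ _ _ _ _ (is_lim_seq_abs _ _ Hl) (is_lim_seq_const M)). intros N.
  rewrite sum_n_Reals. eapply Rle_trans; [apply sum_f_R0_triangle|].
  eapply Rle_trans; [|apply (HM N)]. apply Req_le, sum_eq. intros n _.
  rewrite Rabs_mult, RPow_abs, (Rabs_pos_eq (a n)); auto.
Qed.

Lemma abs_summable_with0 (c : R) (a : nat -> R) (z : R) :
  abs_summable a z -> abs_summable (with0 c a) z.
Proof. intros H. apply ex_series_incr_1. apply ex_series_incr_1 in H. exact H. Qed.

Lemma gf_with0 (c : R) (a : nat -> R) (z : R) :
  abs_summable a z -> gf (with0 c a) z = c - a 0%nat + gf a z.
Proof.
  intros H. pose proof (abs_summable_with0 c a z H) as H0.
  unfold gf. rewrite !(Series_incr_1 (fun n => _ * z ^ n)) by (apply ex_series_Rabs; assumption).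
  simpl. ring.
Qed.

Lemma is_series_conv (t b : nat -> R) (z : R) :
  abs_summable t z -> abs_summable b z ->
  is_series (fun m => conv t b m * z ^ m) (gf t z * gf b z).
Proof.
  intros Ht Hb. eapply is_series_ext; [|apply is_series_mult; try apply gf_correct; eauto].
  intros m. symmetry. apply conv_pow.
Qed.

Lemma is_series_shift (a : nat -> R) (z L : R) :
  is_series (fun m => a (S m) * z ^ m) L -> is_series (fun n => a n * z ^ n) (a 0%nat + z * L).
Proof.
  intros H. apply is_series_decr_1.
  change (is_series (fun k => a (S k) * z ^ S k) (a 0%nat + z * L + - (a 0%nat * z ^ 0))).
  replace (a 0%nat + z * L + - (a 0%nat * z ^ 0)) with (L * z) by (simpl; ring).
  eapply is_series_ext; [|exact (is_series_scal_r z _ _ H)]. intros n. simpl. ring.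
Qed.

Lemma gf_rec1 (a t b : nat -> R) (z : R) :
  (forall m, a (S m) = conv t b m) -> abs_summable t z -> abs_summable b z ->
  gf a z = a 0%nat + z * (gf t z * gf b z).
Proof.
  intros Hr Ht Hb. apply is_series_unique, is_series_shift.
  eapply is_series_ext; [|exact (is_series_conv t b z Ht Hb)]. intros m. rewrite Hr. reflexivity.
Qed.

Lemma gf_rec2 (a t b t' b' : nat -> R) (z : R) :
  (forall m, a (S m) = conv t b m + conv t' b' m) ->
  abs_summable t z -> abs_summable b z -> abs_summable t' z -> abs_summable b' z ->
  gf a z = a 0%nat + z * (gf t z * gf b z + gf t' z * gf b' z).
Proof.
  intros Hr Ht Hb Ht' Hb'. apply is_series_unique, is_series_shift.
  eapply is_series_ext;
    [|exact (is_series_plus _ _ _ _ (is_series_conv t b z Ht Hb) (is_series_conv t' b' z Ht' Hb'))].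
  intros m. rewrite Hr. simpl. unfold plus; simpl. ring.
Qed.

Lemma majorant_step1 (a t b : nat -> R) (x : R) (N : nat) (bt bb : R) :
  (forall m, a (S m) = conv t b m) -> (forall n, 0 <= t n) -> (forall n, 0 <= b n) -> 0 <= x ->
  psum t x N <= bt -> psum b x N <= bb -> psum a x (S N) <= a 0%nat + x * (bt * bb).
Proof.
  intros Hr Ht Hb Hx H1 H2. rewrite psum_S, (psum_ext _ (conv t b)) by exact Hr.
  pose proof (psum_conv_bound t b x N bt bb Ht Hb Hx H1 H2).
  apply Rplus_le_compat_l, Rmult_le_compat_l; assumption.
Qed.

Lemma majorant_step2 (a t b t' b' : nat -> R) (x : R) (N : nat) (bt bb bt' bb' : R) :
  (forall m, a (S m) = conv t b m + conv t' b' m) ->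
  (forall n, 0 <= t n) -> (forall n, 0 <= b n) -> (forall n, 0 <= t' n) -> (forall n, 0 <= b' n) ->
  0 <= x -> psum t x N <= bt -> psum b x N <= bb -> psum t' x N <= bt' -> psum b' x N <= bb' ->
  psum a x (S N) <= a 0%nat + x * (bt * bb + bt' * bb').
Proof.
  intros Hr Ht Hb Ht' Hb' Hx H1 H2 H3 H4.
  rewrite psum_S, (psum_ext _ (fun m => conv t b m + conv t' b' m)) by exact Hr.
  rewrite psum_plus.
  pose proof (psum_conv_bound t b x N bt bb Ht Hb Hx H1 H2).
  pose proof (psum_conv_bound t' b' x N bt' bb' Ht' Hb' Hx H3 H4).
  apply Rplus_le_compat_l, Rmult_le_compat_l; [assumption|lra].
Qed.

(* Majorants: at x = v/(1+v+v^2) with 0 < v < 1, the partial sums of the six sequences are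
   bounded by the closed forms their generating functions take at that point. *)
Section Majorants.

Variable v : R.
Hypothesis hv : 0 < v < 1.

(* The closed forms of E, O, P, QE, QO, Q1 at x are 1+v, D/(1+v), D, QE, QO, vD(1+QE). *)
Let D := 1 + v + v ^ 2.
Let x := v / D.
Let QE := v * (1 + v) / ((1 - v) * D).
Let QO := v ^ 2 / (1 - v ^ 2).

Let D_pos : 0 < D.
Proof. unfold D; nra. Qed.

Let x_nonneg : 0 <= x.
Proof. unfold x. apply Rlt_le, Rdiv_lt_0_compat; lra. Qed.

Let QE_nonneg : 0 <= QE.
Proof. unfold QE. apply Rlt_le, Rdiv_lt_0_compat; nra. Qed.

Let QO_nonneg : 0 <= QO.
Proof. unfold QO. apply Rlt_le, Rdiv_lt_0_compat; nra. Qed.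

Local Hint Resolve nforests_nonneg nleaves_nonneg : core.

Lemma majorant_even_odd (N : nat) :
  psum (nforests 2) x N <= 1 + v /\ psum (nforests 3) x N <= D / (1 + v).
Proof.
  induction N as [|N [IHe IHo]].
  - unfold psum; simpl. rewrite !nforests_0. split; [lra|].
    replace (D / (1 + v)) with (1 + v ^ 2 / (1 + v)) by (unfold D; field; lra).
    enough (0 <= v ^ 2 / (1 + v)) by lra. apply Rlt_le, Rdiv_lt_0_compat; nra.
  - split.
    + eapply Rle_trans.
      { apply (majorant_step1 _ _ _ x N (D / (1 + v)) (1 + v) rec_even); auto.
        - apply with0_nonneg; auto; lra.
        - rewrite psum_with0, nforests_0. lra. }
      rewrite nforests_0. apply Req_le. unfold x, D. field. split; nra.
    + eapply Rle_trans.
      { apply (majorant_step1 _ _ _ x N v (D / (1 + v)) rec_odd); auto.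
        - apply with0_nonneg; auto; lra.
        - rewrite psum_with0, nforests_0. lra. }
      rewrite nforests_0. apply Req_le. unfold x, D. field. split; nra.
Qed.

Lemma majorant_one (N : nat) : psum (nforests 1) x N <= D.
Proof.
  induction N as [|N IH].
  - unfold psum; simpl. rewrite nforests_0. unfold D. nra.
  - eapply Rle_trans.
    { apply (majorant_step1 _ _ _ x N (1 + v) D rec_one); auto.
      - apply with0_nonneg; auto; lra.
      - rewrite psum_with0, nforests_0. destruct (majorant_even_odd N). lra. }
    rewrite nforests_0. apply Req_le. unfold x, D. field. nra.
Qed.

Lemma majorant_leaves_even_odd (N : nat) :
  psum (nleaves 2) x N <= QE /\ psum (nleaves 3) x N <= QO.
Proof.
  induction N as [|N [IHe IHo]].
  - unfold psum; simpl. rewrite !nleaves_0. lra.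
  - destruct (majorant_even_odd N) as [He Ho]. split.
    + eapply Rle_trans.
      { apply (majorant_step2 _ _ _ _ _ x N (1 + QO) (1 + v) (D / (1 + v)) QE rec_leaves_even);
          auto; try (apply with0_nonneg; auto; lra).
        - rewrite psum_with0, nleaves_0. lra.
        - rewrite psum_with0, nforests_0. lra. }
      rewrite nleaves_0. apply Req_le. unfold x, QE, QO, D. field. repeat split; nra.
    + eapply Rle_trans.
      { apply (majorant_step2 _ _ _ _ _ x N QE (D / (1 + v)) v QO rec_leaves_odd);
          auto; try (apply with0_nonneg; auto; lra).
        - rewrite psum_with0, nleaves_0. lra.
        - rewrite psum_with0, nforests_0. lra. }
      rewrite nleaves_0. apply Req_le. unfold x, QE, QO, D. field. repeat split; nra.
Qed.

Lemma majorant_leaves_one (N : nat) : psum (nleaves 1) x N <= v * D * (1 + QE).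
Proof.
  induction N as [|N IH].
  - unfold psum; simpl. rewrite nleaves_0. apply Rle_trans with 0; [lra|].
    apply Rmult_le_pos; nra.
  - destruct (majorant_even_odd N) as [He _]. destruct (majorant_leaves_even_odd N) as [HQ _].
    eapply Rle_trans.
    { apply (majorant_step2 _ _ _ _ _ x N (1 + QE) D (1 + v) (v * D * (1 + QE)) rec_leaves_one);
        auto; try (apply with0_nonneg; auto; lra).
      - rewrite psum_with0, nleaves_0. lra.
      - apply majorant_one.
      - rewrite psum_with0, nforests_0. lra. }
    rewrite nleaves_0. apply Req_le. unfold x, QE, D. field. repeat split; nra.
Qed.

End Majorants.

Lemma vgf_facts (x : R) : 0 < x < 1/3 -> 0 < vgf x < 1 /\ x = vgf x / (1 + vgf x + vgf x ^ 2).
Proof.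
  intros [h0 h1].
  set (s := sqrt (1 - 2*x - 3*x^2)).
  assert (hs : s * s = 1 - 2*x - 3*x^2) by (apply sqrt_sqrt; nra).
  assert (hs0 : 0 <= s) by apply sqrt_pos.
  assert (Hv : vgf x = (1 - x - s) / (2 * x)) by (unfold vgf, Mgf; fold s; field; lra).
  rewrite Hv. set (w := (1 - x - s) / (2 * x)).
  assert (Hw : 2 * x * w = 1 - x - s) by (unfold w; field; lra).
  assert (s < 1 - x) by nra.
  assert (1 - 3 * x < s) by nra.
  assert (0 < w) by (unfold w; apply Rdiv_lt_0_compat; lra).
  assert (w < 1) by nra.
  split; [lra|].
  assert (E : x * (1 + w + w^2) = w).
  { apply (Rmult_eq_reg_l (4 * x)); [|lra].
    replace (4 * x * (x * (1 + w + w ^ 2))) with ((2*x*w)^2 + x*(2*(2*x*w)) + 4*x^2) by ring.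
    replace (4 * x * w) with (2 * (2 * x * w)) by ring. rewrite Hw. nra. }
  apply (Rmult_eq_reg_r (1 + w + w ^ 2)); [|nra].
  unfold Rdiv. rewrite Rmult_assoc, Rinv_l by nra. nra.
Qed.

Lemma retakh_summable (z : R) : 0 < Rabs z < 1/3 ->
  abs_summable (nforests 1) z /\ abs_summable (nforests 2) z /\ abs_summable (nforests 3) z /\
  abs_summable (nleaves 1) z /\ abs_summable (nleaves 2) z /\ abs_summable (nleaves 3) z.
Proof.
  intros hz. destruct (vgf_facts _ hz) as [hv Hx]. set (v := vgf (Rabs z)) in *.
  assert (B : forall a M, (forall n, 0 <= a n) ->
             (forall N, psum a (v / (1 + v + v ^ 2)) N <= M) -> abs_summable a z).
  { intros a M Ha HM. apply (abs_summable_of_bounded a z M Ha). rewrite Hx. exact HM. }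
  repeat split; eapply B; auto using nforests_nonneg, nleaves_nonneg; intros N.
  - apply (majorant_one v hv).
  - apply (majorant_even_odd v hv).
  - apply (majorant_even_odd v hv).
  - apply (majorant_leaves_one v hv).
  - apply (majorant_leaves_even_odd v hv).
  - apply (majorant_leaves_even_odd v hv).
Qed.

(* |E(z) - 1| <= v(|z|) < 1 for the even-depth forest series E; it selects the right
   root of the quadratic equation satisfied by E. *)
Lemma gf_even_close (z : R) : 0 < Rabs z < 1/3 -> abs_summable (nforests 2) z ->
  Rabs (gf (nforests 2) z - 1) < 1.
Proof.
  intros hz He. destruct (vgf_facts _ hz) as [hv Hx]. set (v := vgf (Rabs z)) in *.
  replace (gf (nforests 2) z - 1) with (gf (with0 0 (nforests 2)) z)
    by (rewrite gf_with0, nforests_0 by exact He; ring).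
  apply Rle_lt_trans with v; [|apply hv].
  apply Rabs_gf_le; [apply with0_nonneg; [lra|apply nforests_nonneg]|apply abs_summable_with0, He|].
  intros N. rewrite psum_with0, nforests_0, Hx.
  destruct (majorant_even_odd _ hv N). lra.
Qed.

Section Equations.

Variable z : R.
Hypothesis sE : abs_summable (nforests 2) z.
Hypothesis sO : abs_summable (nforests 3) z.
Hypothesis sP : abs_summable (nforests 1) z.
Hypothesis sQE : abs_summable (nleaves 2) z.
Hypothesis sQO : abs_summable (nleaves 3) z.
Hypothesis sQ1 : abs_summable (nleaves 1) z.

Local Hint Resolve abs_summable_with0 : core.

Lemma gf_even : gf (nforests 2) z = 1 + z * (gf (nforests 3) z * gf (nforests 2) z).
Proof. rewrite (gf_rec1 _ _ _ z rec_even) at 1 by auto. rewrite gf_with0, !nforests_0 by auto. ring. Qed.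

Lemma gf_odd : gf (nforests 3) z = 1 + z * ((gf (nforests 2) z - 1) * gf (nforests 3) z).
Proof. rewrite (gf_rec1 _ _ _ z rec_odd) at 1 by auto. rewrite gf_with0, !nforests_0 by auto. ring. Qed.

Lemma gf_one : gf (nforests 1) z = 1 + z * (gf (nforests 2) z * gf (nforests 1) z).
Proof. rewrite (gf_rec1 _ _ _ z rec_one) at 1 by auto. rewrite gf_with0, !nforests_0 by auto. ring. Qed.

Lemma gf_leaves_even : gf (nleaves 2) z =
  z * ((1 + gf (nleaves 3) z) * gf (nforests 2) z + gf (nforests 3) z * gf (nleaves 2) z).
Proof.
  rewrite (gf_rec2 _ _ _ _ _ z rec_leaves_even) at 1 by auto. rewrite !gf_with0, !nforests_0, !nleaves_0 by auto. ring.
Qed.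

Lemma gf_leaves_odd : gf (nleaves 3) z =
  z * (gf (nleaves 2) z * gf (nforests 3) z + (gf (nforests 2) z - 1) * gf (nleaves 3) z).
Proof.
  rewrite (gf_rec2 _ _ _ _ _ z rec_leaves_odd) at 1 by auto. rewrite !gf_with0, !nforests_0, !nleaves_0 by auto. ring.
Qed.

Lemma gf_leaves_one : gf (nleaves 1) z =
  z * ((1 + gf (nleaves 2) z) * gf (nforests 1) z + gf (nforests 2) z * gf (nleaves 1) z).
Proof.
  rewrite (gf_rec2 _ _ _ _ _ z rec_leaves_one) at 1 by auto. rewrite !gf_with0, !nforests_0, !nleaves_0 by auto. ring.
Qed.

Lemma total_leaves_series :
  is_series (fun n => INR (total_leaves n) * z ^ n) (z * (1 + gf (nleaves 1) z)).
Proof.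
  replace (z * (1 + gf (nleaves 1) z))
    with (INR (total_leaves 0) + z * gf (with0 1 (nleaves 1)) z)
    by (rewrite gf_with0, nleaves_0 by auto; simpl; ring).
  apply (is_series_shift (fun n => INR (total_leaves n))).
  eapply is_series_ext; [|apply gf_correct; auto].
  intros n. rewrite total_leaves_S. reflexivity.
Qed.

End Equations.

Lemma vgf_of_root (z w : R) : -(1/3) < z -> z < 1/3 -> z <> 0 -> -1 < w < 1 ->
  z * w ^ 2 + (z - 1) * w + z = 0 -> vgf z = w.
Proof.
  intros hz1 hz2 hz0 hw G.
  assert (Ed : 1 - 2*z - 3*z^2 = (1 - z - 2*z*w)^2).
  { transitivity ((1 - z - 2*z*w)^2 - 4*z*(z * w ^ 2 + (z - 1) * w + z)); [ring|rewrite G; ring]. }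
  assert (0 <= 1 - z - 2*z*w) by (destruct (Rle_dec 0 z); nra).
  unfold vgf, Mgf. rewrite Ed, sqrt_pow2 by lra. field. exact hz0.
Qed.

Lemma eq_of_multiple (X Y L R c : R) : L = R -> X - Y = c * (L - R) -> X = Y.
Proof. intros H1 H2. rewrite H1 in H2. lra. Qed.

Lemma eq_of_combination (X Y L1 R1 L2 R2 c1 c2 : R) :
  L1 = R1 -> L2 = R2 -> X - Y = c1 * (L1 - R1) + c2 * (L2 - R2) -> X = Y.
Proof. intros H1 H2 H3. rewrite H1, H2 in H3. lra. Qed.

(* Solving the system: E - 1 is the root v(z), which gives z = v/(1+v+v^2), and the
   remaining equations are linear in O, P, QO, QE, Q1 in turn. *)
Lemma solve_gf_system (z E O P QE QO Q1 : R) :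
  -(1/3) < z -> z < 1/3 -> z <> 0 -> Rabs (E - 1) < 1 ->
  E = 1 + z * (O * E) -> O = 1 + z * ((E - 1) * O) -> P = 1 + z * (E * P) ->
  QE = z * ((1 + QO) * E + O * QE) -> QO = z * (QE * O + (E - 1) * QO) ->
  Q1 = z * ((1 + QE) * P + E * Q1) ->
  z * (1 + Q1) = let v := vgf z in
                 v * (1 + v) * (1 - v + 2 * v^2 - v^3) / ((1 - v) * (1 + v + v^2)).
Proof.
  intros hz1 hz2 hz0 hw EqE EqO EqP EqQE EqQO EqQ1. cbv zeta.
  set (w := E - 1) in *. replace E with (1 + w) in * by (unfold w; ring). clearbody w.
  assert (hw_range : -1 < w < 1) by (apply Rabs_def2 in hw; lra).
  assert (G : z * w ^ 2 + (z - 1) * w + z = 0).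
  { apply (eq_of_combination _ _ _ _ _ _ (-(1 - z*w)) (-(z*(1+w))) EqE EqO). ring. }
  rewrite (vgf_of_root z w hz1 hz2 hz0 hw_range G).
  assert (HD : 0 < 1 + w + w^2) by nra.
  assert (Hz : z = w / (1 + w + w^2)).
  { apply (Rmult_eq_reg_r (1 + w + w^2)); [|lra].
    unfold Rdiv. rewrite Rmult_assoc, Rinv_l by lra. nra. }
  subst z.
  assert (HO : O = (1 + w + w^2) / (1 + w)).
  { apply (eq_of_multiple _ _ _ _ ((1 + w + w^2) / (1 + w)) EqO). field. lra. }
  subst O.
  assert (HP : P = 1 + w + w^2).
  { apply (eq_of_multiple _ _ _ _ (1 + w + w^2) EqP). field. lra. }
  subst P.
  assert (HQO : QO = w * (1 + w + w^2) * QE / (1 + w)^2).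
  { apply (eq_of_multiple _ _ _ _ ((1 + w + w^2) / (1 + w)) EqQO). field. lra. }
  subst QO.
  assert (HQE : QE = w * (1 + w) / ((1 - w) * (1 + w + w^2))).
  { apply (eq_of_multiple _ _ _ _ (1 / (1 - w)) EqQE). field. repeat split; lra. }
  subst QE.
  assert (HQ1 : Q1 = w * (1 + w + w^2) * (1 + w * (1 + w) / ((1 - w) * (1 + w + w^2)))).
  { apply (eq_of_multiple _ _ _ _ (1 + w + w^2) EqQ1). field. repeat split; lra. }
  subst Q1.
  field. repeat split; lra.
Qed.

Theorem mainTheorem6 (z : R) (hz1 : -(1/3) < z) (hz2 : z < 1/3) (hz0 : z <> 0) :
  is_series (fun n : nat => INR (total_leaves n) * z ^ n)
    (let v := vgf z in
     v * (1 + v) * (1 - v + 2 * v^2 - v^3) / ((1 - v) * (1 + v + v^2))).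
Proof.
  assert (hz : 0 < Rabs z < 1/3) by (split; [apply Rabs_pos_lt, hz0|apply Rabs_def1; lra]).
  destruct (retakh_summable z hz) as (sP & sE & sO & sQ1 & sQE & sQO).
  rewrite <- (solve_gf_system z _ _ _ _ _ _ hz1 hz2 hz0 (gf_even_close z hz sE)
               (gf_even z sE sO) (gf_odd z sE sO) (gf_one z sE sP)
               (gf_leaves_even z sE sO sQE sQO) (gf_leaves_odd z sE sO sQE sQO)
               (gf_leaves_one z sE sP sQE sQ1)).
  exact (total_leaves_series z sQ1).
Qed.
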